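(* For $n\ge 2$, let $\overline{\mathcal M}_{=}(n)$ be the number of MAU pairs $(u,v)$ of binary words with $|u|=|v|=n$ and $|u|_c=|v|_c$ for all $c\in\{a,b\}$. Then $$\overline{\mathcal M}_{=}(n)=2\sum_{i=1}^{n-1}\frac{1}{n-1}\binom{n-1}{i}\binom{n-1}{i-1}.$$
   Context: Let $\Sigma=\{a,b\}$. For a word $w$ and a letter $c$, $|w|_c$ denotes the number of occurrences of $c$ in $w$. Two words $x,y$ are abelian equivalent, written $x\sim_{\mathrm{abl}}y$, if $|x|_c=|y|_c$ for all $c\in\Sigma$. For words $u,v$: a pair $(x,y)$ is an internal abelian-border of $(u,v)$ if $x$ is a nonempty proper suffix of $u$, $y$ is a proper prefix of $v$, and $x\sim_{\mathrm{abl}}y$; it is an external abelian-border of $(u,v)$ if $x$ is a nonempty proper prefix of $u$, $y$ is a proper suffix of $v$, and $x\sim_{\mathrm{abl}}y$. The pair $(u,v)$ is mutually abelian-bordered (MAB) if it has both an internal and an external abelian-border, and mutually abelian-unbordered (MAU) if it has neither. *)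

From mathcomp Require Import all_boot all_order all_algebra.
Set Implicit Arguments. Unset Strict Implicit. Unset Printing Implicit Defensive.

(* Binary alphabet {a,b} encoded as bool: true = a, false = b. *)
Definition letter := bool.
Definition word := seq letter.

Definition abl_equiv (x y : word) : bool :=
  [forall c : letter, count_mem c x == count_mem c y].

Definition suffix_len (k : nat) (u : word) : word := drop (size u - k) u.

Definition has_internal_abl_border (u v : word) : bool :=
  [exists k : 'I_(size u), exists j : 'I_(size v),
     (0 < (k : nat)) && abl_equiv (suffix_len k u) (take j v)].

Definition has_external_abl_border (u v : word) : bool :=
  [exists k : 'I_(size u), exists j : 'I_(size v),
     (0 < (k : nat)) && abl_equiv (take k u) (suffix_len j v)].

Definition MAU (u v : word) : bool :=
  ~~ has_internal_abl_border u v && ~~ has_external_abl_border u v.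

From mathcomp Require Import all_boot all_order all_algebra zify ring.
Import GRing.Theory Num.Theory.
Set Implicit Arguments. Unset Strict Implicit. Unset Printing Implicit Defensive.

(* When u and v have the same Parikh vector, an external abelian border of
   length k yields an internal one of length n - k, so (u, v) is MAU iff no
   0 < k < n has |v[1..k]|_a = |u[n-k+1..n]|_a.  Pairing v_i with u_(n+1-i)
   turns this into a walk with steps +1, -1 and two kinds of flat steps that
   returns to 0 for the first time at step n.  Splitting every step into two
   +-1 steps, the reflection principle counts the walks of L+1 steps from
   height h > 0 that first hit 0 at their end: C(2L+1, L+1-h) - C(2L+1, L+1+h)
   (checked below by induction on L through Pascal's rule).
   For the first step this gives 2 Cat(n-1), and Vandermonde's identity shows
   that the Narayana sum on the right-hand side is Cat(n-1) as well. *)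

Lemma card_set_count (T : finType) (P : pred T) : #|[set x | P x]| = count P (enum T).
Proof.
rewrite cardsE cardE /enum_mem size_filter (eq_filter (a2 := predT)) //.
by rewrite filter_predT; apply: eq_count.
Qed.

Section Words.
Variable T : finType.

Fixpoint words n : seq (seq T) :=
  if n is n'.+1 then [seq x :: s | x <- enum T, s <- words n'] else [:: [::]].

Lemma mem_words n s : (s \in words n) = (size s == n).
Proof.
elim: n s => [|n IH] [|x s] //=.
- by apply/allpairsP => -[[y t] []].
- rewrite eqSS -IH; apply/allpairsP/idP => [[[y t] [_ t_n [_ ->]]] // | s_n].
  by exists (x, s); rewrite mem_enum.
Qed.

Lemma words_uniq n : uniq (words n).
Proof.
elim: n => //= n IH; apply: allpairs_uniq => //; first exact: enum_uniq.
by move=> [x s] [y t] _ _ [-> ->].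
Qed.

Lemma count_wordsS (P : pred (seq T)) n :
  count P (words n.+1) = \sum_(x : T) count (fun s => P (x :: s)) (words n).
Proof.
rewrite /= -big_enum /=; elim: (enum T) => [|x r IH]; first by rewrite big_nil.
by rewrite /= count_cat count_map IH big_cons.
Qed.

Lemma card_tuples_words n (P : pred (seq T)) :
  #|[set t : n.-tuple T | P t]| = count P (words n).
Proof.
rewrite card_set_count -(count_map val P).
apply/permP/uniq_perm; rewrite ?words_uniq ?(map_inj_uniq val_inj) ?enum_uniq //.
move=> s; rewrite mem_words; apply/mapP/eqP => [[t _ ->] | s_n]; first exact: size_tuple.
by exists (Tuple (introT eqP s_n)); rewrite ?mem_enum.
Qed.

End Words.
Arguments words T%_type n.

Lemma card_pairs_zip_rev (A B : finType) n (P : pred (seq (B * A))) :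
  #|[set uv : n.-tuple A * n.-tuple B | P (zip uv.2 (rev uv.1))]|
    = count P (words (B * A) n).
Proof.
rewrite -card_tuples_words.
pose f (uv : n.-tuple A * n.-tuple B) := [tuple of zip uv.2 (rev uv.1)].
pose g (t : n.-tuple (B * A)) := ([tuple of rev (unzip2 t)], [tuple of unzip1 t]).
have fK : cancel f g.
  by move=> [u v]; congr (_, _); apply: val_inj;
    rewrite /= ?unzip1_zip ?unzip2_zip ?revK ?size_rev ?size_tuple.
have gK : cancel g f by move=> t; apply: val_inj; rewrite /= revK zip_unzip.
rewrite -(on_card_preimset (f := f) (R := [set t | P (val t)])).
  by apply: eq_card => uv; rewrite !inE.
exact: onW_bij (Bijective fK gK).
Qed.

Lemma sum_bool_pair (F : bool * bool -> nat) :
  (\sum_(x : bool * bool) F x =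
   F (true, true) + F (true, false) + F (false, true) + F (false, false))%N.
Proof.
rewrite (eq_bigr (fun x => (fun a b => F (a, b)) x.1 x.2)); last by case.
by rewrite -(pair_bigA _ (fun a b => F (a, b))) !big_bool /= !addnA.
Qed.

Local Open Scope ring_scope.

Definition height (q : seq (bool * bool)) : int :=
  (count_mem true (unzip1 q))%:Z - (count_mem true (unzip2 q))%:Z.

Lemma height_cons x q : height (x :: q) = height [:: x] + height q.
Proof. by rewrite /height /= !PoszD; ring. Qed.

Lemma height_take k q :
  height (take k q) =
  (count_mem true (take k (unzip1 q)))%:Z - (count_mem true (take k (unzip2 q)))%:Z.
Proof. by rewrite /height -!map_take. Qed.

Lemma height_step :
  [/\ height [:: (true, true)] = 0, height [:: (true, false)] = 1,
       height [:: (false, true)] = -1 & height [:: (false, false)] = 0].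
Proof. by []. Qed.

Fixpoint hits0_at_end (h : int) (q : seq (bool * bool)) : bool :=
  if q is x :: q' then (h != 0) && hits0_at_end (h + height [:: x]) q' else h == 0.

Lemma hits0_at_endE h q :
  hits0_at_end h q =
  (h + height q == 0) && all (fun k => h + height (take k q) != 0) (iota 0 (size q)).
Proof.
elim: q h => [|x q IH] h; first by rewrite addr0 andbT.
rewrite /= IH -add1n iotaDl all_map (height_cons x q).
have -> : height [::] = 0 by [].
rewrite addr0 andbCA -addrA; congr (_ && (_ && _)).
by apply: eq_in_all => k _ /=; rewrite add0n (height_cons x (take k q)) -addrA.
Qed.

Definition first_return (p : seq (bool * bool)) : bool :=
  (height p == 0) && all (fun k => height (take k p) != 0) (iota 1 (size p).-1).

Lemma first_return_cons x q : first_return (x :: q) = hits0_at_end (height [:: x]) q.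
Proof.
rewrite hits0_at_endE /first_return (height_cons x q) -add1n iotaDl all_map.
by congr (_ && _); apply: eq_in_all => k _ /=; rewrite (height_cons x (take k q)).
Qed.

Lemma abl_equivE x y :
  abl_equiv x y = (size x == size y) && (count_mem true x == count_mem true y).
Proof.
have size_count s : size s = (count_mem true s + count_mem false s)%N.
  by rewrite -(count_predC (pred1 true)); congr (_ + _)%N; apply: eq_count => -[].
apply/forallP/andP => [eq_xy | [/eqP eq_size /eqP eq_true] [] //].
  by rewrite !size_count (eqP (eq_xy true)) (eqP (eq_xy false)).
by apply/eqP/(@addnI (count_mem true x)); rewrite -size_count eq_true -size_count.
Qed.

Lemma internal_borderE (u v : word) : size v = size u ->
  has_internal_abl_border u v =
  has (fun k => count_mem true (take k v) == count_mem true (drop (size u - k) u))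
      (iota 1 (size u).-1).
Proof.
move=> eq_size; apply/existsP/hasP => [[[k ltku] /existsP [[j ltjv]]] | [k]].
  rewrite /= abl_equivE /suffix_len size_drop size_take ltjv.
  move=> /and3P [k_gt0 /eqP eq_kj /eqP eq_cnt].
  exists k; first by rewrite mem_iota; lia.
  by rewrite eq_cnt (_ : k = j) //; lia.
rewrite mem_iota => /andP [k_gt0 k_lt] eq_count_k.
have ltku : (k < size u)%N by lia.
have ltkv : (k < size v)%N by lia.
exists (Ordinal ltku); apply/existsP; exists (Ordinal ltkv).
rewrite /= k_gt0 abl_equivE /suffix_len size_drop size_take ltkv /=.
by apply/andP; split; [apply/eqP; lia | rewrite eq_sym].
Qed.

Lemma external_internal_border (u v : word) : size v = size u ->
  count_mem true u = count_mem true v ->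
  has_external_abl_border u v -> has_internal_abl_border u v.
Proof.
move=> eq_size eq_cnt /existsP [[k ltku] /existsP [[j ltjv]]].
rewrite /= abl_equivE /suffix_len size_drop size_take ltku.
move=> /and3P [k_gt0 /eqP eq_kj /eqP eq_cnt_k].
rewrite internal_borderE //; apply/hasP; exists (size u - k)%N.
  by rewrite mem_iota; lia.
have split_u := count_cat (pred1 true) (take k u) (drop k u).
have split_v := count_cat (pred1 true) (take (size u - k) v) (drop (size u - k) v).
rewrite !cat_take_drop (_ : size v - j = size u - k)%N in split_u split_v eq_cnt_k; last by lia.
rewrite subKn ?(ltnW ltku) //; apply/eqP; lia.
Qed.

Lemma first_return_zip_rev (u v : word) : size v = size u ->
  first_return (zip v (rev u)) =
  (count_mem true u == count_mem true v) &&
  all (fun k => count_mem true (take k v) != count_mem true (drop (size u - k) u))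
      (iota 1 (size u).-1).
Proof.
move=> eq_size; set p := zip v (rev u).
have p1 : unzip1 p = v by rewrite unzip1_zip // size_rev eq_size.
have p2 : unzip2 p = rev u by rewrite unzip2_zip // size_rev eq_size.
have size_p : size p = size u by rewrite size_zip size_rev eq_size minnn.
rewrite /first_return size_p {1}/height p1 p2 count_rev subr_eq0 eqz_nat eq_sym.
congr (_ && _); apply: eq_in_all => k _.
by rewrite height_take p1 p2 take_rev count_rev subr_eq0 eqz_nat.
Qed.

Lemma MAU_abl_first_return (u v : word) : size v = size u ->
  MAU u v && abl_equiv u v = first_return (zip v (rev u)).
Proof.
move=> eq_size; rewrite first_return_zip_rev // abl_equivE eq_size eqxx /=.
have [eq_cnt | _] := eqVneq (count_mem true u) (count_mem true v); last by rewrite !andbF.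
rewrite andbT all_predC -internal_borderE // /MAU.
case: (boolP (has_internal_abl_border u v)) => //= no_int.
by apply/negP => /(external_internal_border eq_size eq_cnt); apply/negP.
Qed.

Definition nhits0 n h := count (hits0_at_end h) (words (bool * bool) n).

Lemma nhits00 h : nhits0 0 h = (h == 0).
Proof. by rewrite /nhits0 /= addn0. Qed.

Lemma nhits0S n h :
  nhits0 n.+1 h = ((h != 0) * (2 * nhits0 n h + nhits0 n (h + 1) + nhits0 n (h - 1)))%N.
Proof.
rewrite {1}/nhits0 count_wordsS.
rewrite (eq_bigr (fun x => (h != 0) * nhits0 n (h + height [:: x])))%N; last first.
  by move=> x _ /=; case: (h != 0); rewrite ?mul1n ?mul0n; [apply: eq_count | apply: count_pred0].
rewrite -big_distrr sum_bool_pair; case: height_step => -> -> -> ->.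
rewrite /= !addr0; congr (_ * _)%N; lia.
Qed.

Lemma nhits0N n h : nhits0 n (- h) = nhits0 n h.
Proof.
elim: n h => [|n IH] h; first by rewrite !nhits00 oppr_eq0.
rewrite !nhits0S oppr_eq0.
have -> : - h + 1 = - (h - 1) by rewrite opprB addrC.
have -> : - h - 1 = - (h + 1) by rewrite opprD.
by rewrite !IH addnAC.
Qed.

Lemma count_first_return n :
  count first_return (words (bool * bool) n.+2) = (2 * nhits0 n.+1 1)%N.
Proof.
rewrite count_wordsS (eq_bigr (fun x => nhits0 n.+1 (height [:: x]))); last first.
  by move=> x _; apply: eq_count => q; rewrite first_return_cons.
rewrite sum_bool_pair; case: height_step => -> -> -> ->.
by rewrite nhits0N (nhits0S n 0) mul0n add0n addn0 addnn -mul2n.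
Qed.

Definition binz (N : nat) (z : int) : int := if z is Posz m then ('C(N, m))%:Z else 0.

Lemma binzS N z : binz N.+1 (z + 1) = binz N (z + 1) + binz N z.
Proof.
case: z => [m|[|m]]; first by rewrite -PoszD addn1 /= binS PoszD.
- by rewrite /= !bin0 addr0.
- by rewrite NegzE (_ : - (Posz m.+2) + 1 = Negz m) ?NegzE ?addr0 //; lia.
Qed.

Lemma binzSS N z :
  binz N.+2 (z + 1) = binz N (z + 1) + 2 * binz N z + binz N (z - 1).
Proof.
rewrite (binzS N.+1) (binzS N) -[in binz N.+1 z](subrK 1 z) binzS subrK; ring.
Qed.

Definition ballot L (h : int) : int :=
  binz (L + L).+1 (L%:Z + 1 - h) - binz (L + L).+1 (L%:Z + 1 + h).

Lemma ballot0 L : ballot L 0 = 0.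
Proof. by rewrite /ballot oppr0 !addr0 subrr. Qed.

Lemma ballotS L h :
  ballot L.+1 h = 2 * ballot L h + ballot L (h + 1) + ballot L (h - 1).
Proof.
rewrite /ballot addSn addnS; set a := L%:Z + 1.
have -> : L.+1%:Z + 1 - h = (a - h) + 1 by rewrite intS /a; ring.
have -> : L.+1%:Z + 1 + h = (a + h) + 1 by rewrite intS /a; ring.
have -> : a - (h + 1) = (a - h) - 1 by ring.
have -> : a - (h - 1) = (a - h) + 1 by ring.
have -> : a + (h + 1) = (a + h) + 1 by ring.
have -> : a + (h - 1) = (a + h) - 1 by ring.
rewrite !binzSS; ring.
Qed.

Lemma nhits0_ballot L (h : nat) : (nhits0 L.+1 h)%:Z = ballot L h.
Proof.
elim: L h => [|L IH] [|h]; rewrite ?ballot0 nhits0S //; first by rewrite !nhits00; case: h.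
rewrite ballotS; have -> : h.+1%:Z + 1 = h.+2 by lia.
have -> : h.+1%:Z - 1 = h by lia.
by rewrite mul1n -!IH; lia.
Qed.

Lemma ballot1_catalan m : m.+1%:Z * ballot m 1 = ('C(m.+1 + m.+1, m.+2))%:Z.
Proof.
rewrite /ballot addrK (_ : m%:Z + 1 + 1 = m.+2) /=; last by lia.
set X := 'C((m + m).+1, m); set Y := 'C((m + m).+1, m.+2).
have X_sym : 'C((m + m).+1, m.+1) = X by rewrite -bin_sub ?subSS ?addnK // ltnS leq_addl.
have Y_X : (m.+2 * Y = m * X)%N by rewrite mul_bin_left X_sym; congr (_ * _)%N; lia.
rewrite addSn addnS binS X_sym; lia.
Qed.

Lemma sum_bin_binB1 n :
  (\sum_(1 <= i < n.+1) 'C(n, i) * 'C(n, i - 1) = 'C(n + n, n.+1))%N.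
Proof.
rewrite -binomial.Vandermonde -(big_mkord xpredT (fun i => 'C(n, i) * 'C(n, n.+1 - i)))%N.
rewrite [RHS]big_ltn // [in RHS]big_nat_recr //= bin0 subn0 bin_small // muln0 mul0n add0n addn0.
apply: eq_big_nat => i /andP [i_gt0 lein].
by rewrite -[in LHS](bin_sub (leq_trans (leq_subr 1 i) lein)) subnBA // addn1.
Qed.

Theorem mainTheorem9 (n : nat) (hn : (2 <= n)%N) :
  ((#|[set uv : n.-tuple bool * n.-tuple bool |
        MAU uv.1 uv.2 && abl_equiv uv.1 uv.2]|)%:R : rat) =
  2 * \sum_(1 <= i < n)
        ((n - 1)%:R^-1 * ('C(n - 1, i))%:R * ('C(n - 1, i - 1))%:R).
Proof.
case: n hn => [|[|m]] // _; rewrite subn1 /=.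
have -> : [set uv : m.+2.-tuple bool * m.+2.-tuple bool | MAU uv.1 uv.2 && abl_equiv uv.1 uv.2]
    = [set uv : m.+2.-tuple bool * m.+2.-tuple bool | first_return (zip uv.2 (rev uv.1))].
  by apply/setP => uv; rewrite !inE MAU_abl_first_return // !size_tuple.
rewrite card_pairs_zip_rev count_first_return.
have catalan : (m.+1 * nhits0 m.+1 1)%N = 'C(m.+1 + m.+1, m.+2).
  by apply/eqP; rewrite -eqz_nat PoszM (nhits0_ballot m 1) ballot1_catalan.
under eq_bigr do rewrite -mulrA -natrM.
by rewrite -mulr_sumr -natr_sum sum_bin_binB1 -catalan !natrM mulKf ?pnatr_eq0.
Qed.
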